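(* Let $m\ge 1$ be a fixed integer. Let $(r_t)_{t\in\mathbb{Z}}$ be a real-valued process with $r_t=\sigma\epsilon_t$, where $\sigma>0$ is a constant and $(\epsilon_t)$ is a random process. Let $a_t=1$ if $r_t\neq 0$ and $a_t=0$ if $r_t=0$. Assume $E(\epsilon_t\mid a_t=1)=0$, $E(\epsilon_t^2\mid a_t=1)=1$, and that $P(a_ta_{t-h}=1)>0$ for $h=0,1,\dots,m$. Suppose that $(r_t)$ is strictly stationary and ergodic, with $E(r_t^2)<\infty$ and $E(r_t)=0$. Given observations $r_1,\dots,r_n$, define for $h=0,1,\dots,m$ $$\hat{\gamma}_0(h)=\frac1n\sum_{t=1+h}^n r_tr_{t-h},\quad \hat\rho_0(h)=\frac{\hat\gamma_0(h)}{\hat\gamma_0(0)},\quad \hat{\gamma}_a(h)=\frac1n\sum_{t=h+1}^n a_ta_{t-h},$$ and $\widehat{\Gamma}_{pr}(m)=(\hat\rho_{pr}(1),\dots,\hat\rho_{pr}(m))'$ with $\hat\rho_{pr}(h)=\hat\rho_0(h)\,\hat\gamma_a(0)/\hat\gamma_a(h)$. Let $\rho_\epsilon(h)=E(\epsilon_t\epsilon_{t-h}\mid a_ta_{t-h}=1)$ (which does not depend on $t$) and $\Gamma_\epsilon(m)=(\rho_\epsilon(1),\dots,\rho_\epsilon(m))'$. Then $\widehat{\Gamma}_{pr}(m)\to\Gamma_\epsilon(m)$ almost surely as $n\to\infty$.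
   Context: $a_t$ indicates a nonzero return (a price change) at date $t$. The quantities $\rho_\epsilon(h)$ are the serial correlations of the price changes. *)

From HB Require Import structures.
From mathcomp Require Import all_boot all_order all_algebra.
From mathcomp Require Import all_classical all_reals all_analysis.
Set Implicit Arguments. Unset Strict Implicit. Unset Printing Implicit Defensive.
Import Order.TTheory GRing.Theory Num.Theory.
Import numFieldNormedType.Exports.
Local Open Scope classical_set_scope.
Local Open Scope ring_scope.

Section Defs.
Context {R : realType}.

Definition cylinders : set (set (int -> R)) :=
  [set C | exists (t : int) (A : set R), measurable A /\ C = [set x | A (x t)]].

Definition prod_measurable (B : set (int -> R)) : Prop := <<s cylinders>> B.

Definition shift (x : int -> R) : int -> R := fun t => x (t + 1).

Context {d : measure_display} {T : measurableType d}.

Definition path_event (X : int -> T -> R) (B : set (int -> R)) : set T :=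
  [set w | B (fun t => X t w)].

Definition strictly_stationary (P : probability T R) (X : int -> T -> R) :=
  forall B, prod_measurable B ->
    P (path_event X B) = P (path_event X [set x | B (shift x)]).

Definition ergodic (P : probability T R) (X : int -> T -> R) :=
  forall B, prod_measurable B -> [set x | B (shift x)] = B ->
    P (path_event X B) = 0%E \/ P (path_event X B) = 1%E.

(* elementary conditional expectation given an event A with P A > 0 *)
Definition cond_exp (P : probability T R) (X : T -> R) (A : set T) : R :=
  fine (\int[P]_(w in A) (X w)%:E) / fine (P A).

Definition ind_nz (X : int -> T -> R) (t : int) (w : T) : R :=
  if X t w != 0 then 1 else 0.

Definition gamma0_hat (X : int -> T -> R) (n h : nat) (w : T) : R :=
  n%:R^-1 * \sum_(h.+1 <= t < n.+1) X t%:Z w * X (t%:Z - h%:Z) w.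

Definition rho0_hat (X : int -> T -> R) (n h : nat) (w : T) : R :=
  gamma0_hat X n h w / gamma0_hat X n 0 w.

Definition gammaa_hat (X : int -> T -> R) (n h : nat) (w : T) : R :=
  n%:R^-1 * \sum_(h.+1 <= t < n.+1) ind_nz X t%:Z w * ind_nz X (t%:Z - h%:Z) w.

Definition rhopr_hat (X : int -> T -> R) (n h : nat) (w : T) : R :=
  rho0_hat X n h w * gammaa_hat X n 0 w / gammaa_hat X n h w.

End Defs.

From Pilot Require Import Defs.
From HB Require Import structures.
From mathcomp Require Import all_boot all_order all_algebra.
From mathcomp Require Import all_classical all_reals all_analysis.
From mathcomp Require Import measurable_realfun.
From mathcomp Require Import ring lra.
Import Order.TTheory GRing.Theory Num.Theory.
Import numFieldNormedType.Exports.
Local Open Scope classical_set_scope.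
Local Open Scope ring_scope.
Set Implicit Arguments. Unset Strict Implicit. Unset Printing Implicit Defensive.

(* The sample autocovariances gamma0_hat(h) and gammaa_hat(h) are, up to finitely
   many boundary terms, ergodic averages of x_t x_{t-h} and 1{x_t <> 0} 1{x_{t-h} <> 0}
   along the shift of the path space R^Z, which preserves the law of (r_t) and is
   ergodic for it.  Birkhoff's ergodic theorem, obtained from Garsia's maximal
   ergodic inequality, makes them converge almost surely to sigma^2 E(eps_t eps_{t-h})
   and P(a_t a_{t-h} = 1).  Since eps_t eps_{t-h} vanishes off {a_t a_{t-h} = 1}, the
   quotient of these limits is sigma^2 rho_eps(h); and E(eps_t^2 | a_t = 1) = 1 says
   that the limit of gamma0_hat(0) is sigma^2 times that of gammaa_hat(0), so the
   normalisation gammaa_hat(0) / gamma0_hat(0) in rhopr_hat(h) removes the sigma^2. *)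

Local Notation Rintegrable mu f := (mu.-integrable setT (EFin \o f)).

Section real_integrable.
Context d (U : measurableType d) (R : realType) (mu : probability U R).
Implicit Types f g : U -> R.

Lemma Rintegrable_measurable f : Rintegrable mu f -> measurable_fun setT f.
Proof. by move=> /integrableP[/measurable_EFinP]. Qed.

Lemma Rintegrable_cst (c : R) : Rintegrable mu (fun=> c).
Proof. exact: finite_measure_integrable_cst. Qed.

Lemma RintegrableD f g : Rintegrable mu f -> Rintegrable mu g ->
  Rintegrable mu (fun x => f x + g x).
Proof. exact: integrableD. Qed.

Lemma RintegrableN f : Rintegrable mu f -> Rintegrable mu (fun x => - f x).
Proof. exact: integrableN. Qed.

Lemma RintegrableB f g : Rintegrable mu f -> Rintegrable mu g ->
  Rintegrable mu (fun x => f x - g x).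
Proof. by move=> fi gi; apply: RintegrableD => //; exact: RintegrableN. Qed.

Lemma Rintegrable_norm f : Rintegrable mu f -> Rintegrable mu (fun x => `|f x|).
Proof. exact: integrable_abse. Qed.

Lemma Rintegrable_le f g : measurable_fun setT f -> Rintegrable mu g ->
  (forall x, `|f x| <= g x) -> Rintegrable mu f.
Proof.
move=> mf gi fg; apply: (le_integrable measurableT _ _ gi).
  exact/measurable_EFinP.
move=> x _ /=; rewrite lee_fin (le_trans (fg x)) //.
by rewrite real_ler_norm // ger0_real // (le_trans _ (fg x)).
Qed.

Lemma Rintegrable_mul_indic f (B : set U) : Rintegrable mu f -> measurable B ->
  Rintegrable mu (fun x => f x * \1_B x).
Proof.
move=> fi mB; apply: (Rintegrable_le _ (Rintegrable_norm fi)).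
  by apply: measurable_funM; [exact: Rintegrable_measurable|exact: measurable_indic].
move=> x; rewrite normrM indicE.
by case: (_ \in _); rewrite ?normr1 ?normr0 ?mulr1 ?mulr0.
Qed.

Lemma Rintegral_cst_probability (c : R) : \int[mu]_x c = c.
Proof.
rewrite Rintegral_cst // -[RHS]mulr1; congr (_ * _).
exact: (congr1 fine (probability_setT mu)).
Qed.

Lemma RintegralN f : Rintegrable mu f -> \int[mu]_x (- f x) = - \int[mu]_x f x.
Proof.
move=> fi; rewrite -[RHS]sub0r -(Rintegral_cst_probability 0) -RintegralB //.
  by apply: eq_Rintegral => x _; rewrite sub0r.
exact: Rintegrable_cst.
Qed.

Lemma Rintegrable_mul_sqr f g : measurable_fun setT f -> measurable_fun setT g ->
  Rintegrable mu (fun x => f x ^+ 2) -> Rintegrable mu (fun x => g x ^+ 2) ->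
  Rintegrable mu (fun x => f x * g x).
Proof.
move=> mf mg f2i g2i.
apply: (Rintegrable_le (measurable_funM mf mg) (RintegrableD f2i g2i)) => x.
rewrite normrM -[f x ^+ 2]real_normK ?num_real // -[g x ^+ 2]real_normK ?num_real //.
by have := normr_ge0 (f x); have := normr_ge0 (g x); nra.
Qed.

Lemma Rintegral_support (A : set U) f : (forall x, ~ A x -> f x = 0) ->
  \int[mu]_(x in A) f x = \int[mu]_x f x.
Proof.
move=> f0; rewrite Rintegral_mkcond; apply: eq_Rintegral => x _.
by rewrite patchE; case: ifPn => // /negP xA; rewrite f0 // => /mem_set.
Qed.

Lemma Rintegral_indicator_fun f : measurable_fun setT f ->
  (forall x, f x = 0 \/ f x = 1) -> \int[mu]_x f x = fine (mu [set x | f x = 1]).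
Proof.
move=> mf f01; have mf1 : measurable [set x | f x = 1].
  by rewrite -[X in measurable X]setTI; exact: mf (measurable_set1 1).
have -> : \int[mu]_x f x = \int[mu]_x (\1_[set x | f x = 1] x : R).
  apply: eq_Rintegral => x _; rewrite indicE.
  have [fx0|fx1] := f01 x; last by rewrite mem_set ?fx1.
  by rewrite memNset ?fx0 //= fx0 => /eqP; rewrite eq_sym oner_eq0.
by rewrite /Rintegral integral_indic // setIT.
Qed.

End real_integrable.

Section measure_preserving.
Context d (U : measurableType d) (R : realType) (mu : probability U R) (S : U -> U).
Hypothesis mS : measurable_fun setT S.
Hypothesis S_preserving : forall B, measurable B -> mu (S @^-1` B) = mu B.

Let pushforward_id (g : U -> \bar R) :
  (\int[mu]_x g x = \int[pushforward mu S]_x g x)%E.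
Proof. by apply: eq_measure_integral => A mA _; exact/esym/S_preserving. Qed.

Lemma Rintegrable_comp_preserving f : Rintegrable mu f -> Rintegrable mu (f \o S).
Proof.
move=> fi; apply/integrableP; split.
  apply/measurable_EFinP; apply: measurableT_comp => //.
  exact: Rintegrable_measurable fi.
move/integrableP: fi => [mf]; rewrite pushforward_id ge0_integral_pushforward //.
by apply: measurableT_comp => //; exact: abse_measurable.
Qed.

Lemma Rintegral_comp_preserving f : Rintegrable mu f ->
  \int[mu]_x (f \o S) x = \int[mu]_x f x.
Proof.
move=> fi; have fSi := Rintegrable_comp_preserving fi.
rewrite /Rintegral [in RHS]pushforward_id integral_pushforward //.
exact/measurable_EFinP/(Rintegrable_measurable fi).
Qed.

Lemma measurable_iter k : measurable_fun setT (iter k S).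
Proof. by elim: k => [|k IHk] /=; [exact: measurable_id|exact: measurableT_comp]. Qed.

Lemma iter_preserving k B : measurable B -> mu (iter k S @^-1` B) = mu B.
Proof.
move=> mB; elim: k => [//|k <-].
have mSkB : measurable (iter k S @^-1` B).
  by rewrite -[X in measurable X]setTI; exact: measurable_iter.
by rewrite -(S_preserving mSkB); congr (mu _); apply/funext => x /=; rewrite -iterSr.
Qed.

End measure_preserving.

Section ergodic_sums.
Context d (U : measurableType d) (R : realType) (S : U -> U).
Implicit Types (f g : U -> R) (x : U).

Definition ergodic_sum f n x := \sum_(0 <= k < n) f (iter k S x).

Lemma ergodic_sum0 f x : ergodic_sum f 0 x = 0.
Proof. by rewrite /ergodic_sum big_geq. Qed.

Lemma ergodic_sumS f n x : ergodic_sum f n.+1 x = f x + ergodic_sum f n (S x).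
Proof.
rewrite /ergodic_sum big_nat_recl //; congr (_ + _).
by apply: eq_bigr => k _; rewrite iterSr.
Qed.

Lemma ergodic_sumN f n x : ergodic_sum (fun y => - f y) n x = - ergodic_sum f n x.
Proof. by rewrite /ergodic_sum sumrN. Qed.

Lemma ergodic_sum_subr f c n x :
  ergodic_sum (fun y => f y - c) n x = ergodic_sum f n x - n%:R * c.
Proof. by rewrite /ergodic_sum sumrB sumr_const_nat subn0 mulr_natl. Qed.

Lemma ergodic_sum_le_norm f k n x : (k <= n)%N ->
  ergodic_sum f k x <= ergodic_sum (fun y => `|f y|) n x.
Proof.
move=> kn; rewrite /ergodic_sum [leRHS](@big_cat_nat _ _ _ k) //= -[leLHS]addr0.
apply: lerD; last by rewrite sumr_ge0.
by apply: ler_sum => i _; exact: ler_norm.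
Qed.

Fixpoint max_ergodic_sum g n x :=
  if n is n'.+1 then Num.max (max_ergodic_sum g n' x) (ergodic_sum g n x) else 0.

Lemma max_ergodic_sum_ge0 g n x : 0 <= max_ergodic_sum g n x.
Proof. by elim: n => [|n IHn] //=; rewrite le_max IHn. Qed.

Lemma ergodic_sum_le_max g k n x : (k <= n)%N ->
  ergodic_sum g k x <= max_ergodic_sum g n x.
Proof.
elim: n => [|n IHn]; first by rewrite leqn0 => /eqP ->; rewrite ergodic_sum0.
rewrite leq_eqVlt => /orP[/eqP ->|kn] /=; first by rewrite le_max lexx orbT.
by rewrite le_max IHn.
Qed.

Lemma max_ergodic_sum_le g n x c : 0 <= c ->
  (forall k, (k <= n)%N -> ergodic_sum g k x <= c) -> max_ergodic_sum g n x <= c.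
Proof.
move=> c0; elim: n => [|n IHn] gc //=.
by rewrite ge_max IHn ?gc // => k kn; apply: gc; exact: leqW.
Qed.

Lemma max_ergodic_sum_le_shift g n x :
  max_ergodic_sum g n x <= Num.max 0 (g x + max_ergodic_sum g n (S x)).
Proof.
apply: max_ergodic_sum_le => [|[|k] kn]; first by rewrite le_max lexx.
  by rewrite ergodic_sum0 le_max lexx.
rewrite ergodic_sumS le_max lerD2l ergodic_sum_le_max ?orbT //.
exact: ltnW.
Qed.

Hypothesis mS : measurable_fun setT S.

Lemma measurable_ergodic_sum f n : measurable_fun setT f ->
  measurable_fun setT (ergodic_sum f n).
Proof.
move=> mf; apply: measurable_sum => k.
exact: measurableT_comp mf (measurable_iter mS k).
Qed.

Lemma measurable_max_ergodic_sum g n : measurable_fun setT g ->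
  measurable_fun setT (max_ergodic_sum g n).
Proof.
move=> mg; elim: n => [|n IHn] /=; first exact: measurable_cst.
by apply: measurable_maxr => //; exact: measurable_ergodic_sum.
Qed.

Variable mu : probability U R.
Hypothesis S_preserving : forall B, measurable B -> mu (S @^-1` B) = mu B.

Lemma Rintegrable_ergodic_sum f n : Rintegrable mu f ->
  Rintegrable mu (ergodic_sum f n).
Proof.
move=> fi; rewrite /ergodic_sum; elim: n => [|n IHn].
  by under eq_fun do rewrite big_geq //; exact: Rintegrable_cst.
under eq_fun do rewrite big_nat_recr //=.
apply: RintegrableD => //.
exact (Rintegrable_comp_preserving (measurable_iter mS n)
  (iter_preserving mS S_preserving n) fi).
Qed.

Lemma Rintegrable_max_ergodic_sum g n : Rintegrable mu g ->
  Rintegrable mu (max_ergodic_sum g n).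
Proof.
move=> gi; have mg := Rintegrable_measurable gi.
apply: (Rintegrable_le (measurable_max_ergodic_sum n mg)).
  exact: (Rintegrable_ergodic_sum n (Rintegrable_norm gi)).
move=> x; rewrite ger0_norm ?max_ergodic_sum_ge0 //.
apply: max_ergodic_sum_le => [|k kn]; last exact: ergodic_sum_le_norm.
by rewrite sumr_ge0.
Qed.

Definition max_ergodic_sum_pos g n := [set x | 0 < max_ergodic_sum g n x].

Lemma measurable_max_ergodic_sum_pos g n : measurable_fun setT g ->
  measurable (max_ergodic_sum_pos g n).
Proof.
move=> mg; have := measurable_max_ergodic_sum n mg measurableT
  (measurable_itv `]0, +oo[).
by rewrite setTI preimage_itvoy.
Qed.

(* Garsia: M_n - M_n \o S <= g on {M_n > 0} and <= 0 elsewhere, while M_n \o S and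
   M_n have the same integral. *)
Lemma maximal_ergodic g n : Rintegrable mu g ->
  0 <= \int[mu]_x (g x * \1_(max_ergodic_sum_pos g n) x).
Proof.
move=> gi; set M := max_ergodic_sum g n.
have step x : M x - M (S x) <= g x * \1_(max_ergodic_sum_pos g n) x.
  rewrite indicE; case: (boolP (x \in _)) => [/set_mem /= Mx_gt0|/negP Mx_le0].
    rewrite mulr1 lerBlDr; have := max_ergodic_sum_le_shift g n x.
    by rewrite le_max leNgt Mx_gt0 /= addrC.
  rewrite mulr0 subr_le0 (le_trans _ (max_ergodic_sum_ge0 _ _ _)) //.
  by rewrite leNgt; apply/negP => Mx_gt0; apply: Mx_le0; exact/mem_set.
have Mi : Rintegrable mu M := Rintegrable_max_ergodic_sum n gi.
have MSi := Rintegrable_comp_preserving mS S_preserving Mi.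
have mB := measurable_max_ergodic_sum_pos n (Rintegrable_measurable gi).
apply: le_trans (le_Rintegral _ (RintegrableB Mi MSi)
  (Rintegrable_mul_indic gi mB) (fun x _ => step x)) => //.
by rewrite RintegralB // (Rintegral_comp_preserving mS S_preserving Mi) subrr.
Qed.

End ergodic_sums.

Lemma eventually_le_natmul (R : archiRealFieldType) (C e : R) : 0 < e ->
  exists N, forall n, (N <= n)%N -> C <= n%:R * e.
Proof.
move=> e0; exists (Num.Def.archi_bound `|C / e|) => n Nn.
rewrite -ler_pdivrMr // (le_trans (ler_norm _)) // ltW //.
by apply: lt_le_trans (archi_boundP (normr_ge0 _)) _; rewrite ler_nat.
Qed.

Section birkhoff.
Context d (U : measurableType d) (R : realType) (mu : probability U R) (S : U -> U).
Hypothesis mS : measurable_fun setT S.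
Hypothesis S_preserving : forall B, measurable B -> mu (S @^-1` B) = mu B.
Hypothesis S_ergodic : forall B, measurable B -> S @^-1` B = B ->
  mu B = 0%E \/ mu B = 1%E.
Implicit Types (f g : U -> R) (x : U).

Local Notation ergodic_sum := (ergodic_sum S).

Definition often_above f b x :=
  forall N, exists2 n, (N <= n)%N & n.+1%:R * b < ergodic_sum f n.+1 x.

Lemma often_above_shift f b b' x : b' < b ->
  often_above f b x -> often_above f b' (S x).
Proof.
move=> b'b above N; have gap : 0 < b - b' by rewrite subr_gt0.
have [M HM] := eventually_le_natmul (f x - b) gap.
have [[|n] Nn] := above (maxn N.+1 M); first by rewrite geq_max ltn0 in Nn.
rewrite ergodic_sumS => lt_nSx; exists n.
  by rewrite geq_max ltnS in Nn; case/andP: Nn.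
have := HM n.+1 (leq_trans (leq_maxr _ _) Nn).
move: lt_nSx; rewrite -(@natr1 R n.+1) mulrDl mul1r mulrBr; lra.
Qed.

Lemma often_above_unshift f b b' x : b' < b ->
  often_above f b (S x) -> often_above f b' x.
Proof.
move=> b'b above N; have gap : 0 < b - b' by rewrite subr_gt0.
have [M HM] := eventually_le_natmul (b' - f x) gap.
have [n Nn lt_nSx] := above (maxn N M); exists n.+1.
  exact/leqW/(leq_trans (leq_maxl _ _) Nn).
have := HM n.+1 (leqW (leq_trans (leq_maxr _ _) Nn)).
rewrite ergodic_sumS -(@natr1 R n.+1) mulrDl mul1r mulrBr; lra.
Qed.

(* The event {limsup_n n^-1 S_n f > a}, written with an explicit margin 1/(k+1):
   a shift only consumes part of the margin, which makes the event invariant. *)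
Definition limsup_above f a :=
  [set x | exists k, often_above f (a + k.+1%:R^-1) x].

Let shrink_step (a : R) k : a + k.+2%:R^-1 < a + k.+1%:R^-1.
Proof. by rewrite ltrD2l ltf_pV2 ?posrE ?ltr_nat. Qed.

Lemma limsup_above_invariant f a : S @^-1` limsup_above f a = limsup_above f a.
Proof.
apply/seteqP; split => x [k above]; exists k.+1.
  exact: often_above_unshift (shrink_step a k) above.
exact: often_above_shift (shrink_step a k) above.
Qed.

Lemma measurable_limsup_above f a : measurable_fun setT f ->
  measurable (limsup_above f a).
Proof.
move=> mf; have -> : limsup_above f a =
    \bigcup_k \bigcap_N \bigcup_(n in [set n | (N <= n)%N])
      [set x | n.+1%:R * (a + k.+1%:R^-1) < ergodic_sum f n.+1 x].
  apply/seteqP; split => x /=.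
  - by move=> [k above]; exists k => // N _; have [n Nn lt_n] := above N; exists n.
  - by move=> [k _ above]; exists k => N; have [n Nn lt_n] := above N I; exists n.
apply: bigcupT_measurable => k; apply: bigcapT_measurable => N.
apply: bigcup_measurable => n _.
have := measurable_ergodic_sum mS n.+1 mf measurableT
  (measurable_itv `]n.+1%:R * (a + k.+1%:R^-1), +oo[).
by rewrite setTI preimage_itvoy.
Qed.

Lemma limsup_above_max_ergodic_sum_pos f a x : limsup_above f a x ->
  \forall n \near \oo, max_ergodic_sum_pos S (fun y => f y - a) n x.
Proof.
move=> [k above]; have [n _ lt_n] := above 0%N; exists n.+1 => // m /= nm.
rewrite /max_ergodic_sum_pos /=; apply: lt_le_trans (ergodic_sum_le_max _ _ _ nm).
rewrite ergodic_sum_subr subr_gt0.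
by apply: le_lt_trans lt_n; rewrite ler_pM2l ?ltr0n // lerDl.
Qed.

Lemma Rintegral_ge0_of_max_ergodic_sum_pos g : Rintegrable mu g ->
  {ae mu, forall x, \forall n \near \oo, max_ergodic_sum_pos S g n x} ->
  0 <= \int[mu]_x g x.
Proof.
move=> gi ae_pos; have mg := Rintegrable_measurable gi.
pose gB n x := (g x * \1_(max_ergodic_sum_pos S g n) x)%:E.
have mgB n : measurable_fun setT (gB n).
  apply/measurable_EFinP; apply: measurable_funM => //.
  exact/measurable_indic/measurable_max_ergodic_sum_pos.
have gB_cvg : {ae mu, forall x, setT x -> gB ^~ x @ \oo --> (g x)%:E}.
  apply: filterS ae_pos => x [N _ pos] _; apply: cvg_near_cst.
  by exists N => // n /= Nn; rewrite /gB indicE mem_set ?mulr1 //; exact: pos.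
have gB_dom : {ae mu, forall x n, setT x -> (`|gB n x| <= `|g x|%:E)%E}.
  apply: aeW => x n _; rewrite lee_fin normrM indicE.
  by case: (_ \in _); rewrite ?normr1 ?normr0 ?mulr1 ?mulr0.
have mEg : measurable_fun setT (EFin \o g) by exact/measurable_EFinP.
have [_ _ cvg_int] := dominated_convergence measurableT mgB mEg gB_cvg
  (Rintegrable_norm gi) gB_dom.
rewrite /Rintegral fine_ge0 // -(cvg_lim _ cvg_int) //.
apply: lime_ge; first exact: cvgP cvg_int.
apply: nearW => n; have := maximal_ergodic mS S_preserving n gi.
have gBi := Rintegrable_mul_indic gi (measurable_max_ergodic_sum_pos mS n mg).
by rewrite /Rintegral -lee_fin fineK //; exact: integrable_fin_num gBi.
Qed.

Lemma limsup_above_null f a : Rintegrable mu f -> \int[mu]_x f x < a ->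
  mu (limsup_above f a) = 0%E.
Proof.
move=> fi fa; have mE := measurable_limsup_above a (Rintegrable_measurable fi).
have [//|E1] := S_ergodic mE (limsup_above_invariant f a).
have fai : Rintegrable mu (fun x => f x - a) := RintegrableB fi (Rintegrable_cst _ a).
suff : 0 <= \int[mu]_x (f x - a).
  rewrite RintegralB ?Rintegral_cst_probability ?subr_ge0 ?leNgt ?fa //.
  exact: Rintegrable_cst.
apply: Rintegral_ge0_of_max_ergodic_sum_pos fai _.
exists (~` limsup_above f a); split; first exact: measurableC.
  by rewrite probability_setC // E1 subee.
by move=> x /= not_pos Ex; apply: not_pos; exact: limsup_above_max_ergodic_sum_pos.
Qed.

Lemma not_often_above f b x : ~ often_above f b x ->
  \forall n \near \oo, n%:R^-1 * ergodic_sum f n x <= b.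
Proof.
move=> /existsNP[N below]; exists N.+1 => // -[//|n] /= Nn.
rewrite ler_pdivrMl ?ltr0n // leNgt; apply/negP => lt_n.
by apply: below; exists n.
Qed.

Lemma ergodic_avg_le f : Rintegrable mu f -> {ae mu, forall x, forall e, 0 < e ->
  \forall n \near \oo, n%:R^-1 * ergodic_sum f n x <= \int[mu]_x f x + e}.
Proof.
move=> fi; set c := \int[mu]_x f x.
have : {ae mu, forall x, forall j, ~ limsup_above f (c + j.+1%:R^-1) x}.
  apply: ae_foralln => j; exists (limsup_above f (c + j.+1%:R^-1)); split.
  - exact: measurable_limsup_above (Rintegrable_measurable fi).
  - by apply: (limsup_above_null fi); rewrite ltrDl invr_gt0 ltr0n.
  - by move=> x /= /contrapT.
apply: filterS => x not_above e e0.
have e20 : 0 < e / 2 by rewrite divr_gt0.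
have [j _ /(_ j (leqnn j)) je] := near_infty_natSinv_lt (PosNum e20).
have {}je : j.+1%:R^-1 < e / 2 := je.
have /not_often_above : ~ often_above f (c + j.+1%:R^-1 + j.+1%:R^-1) x.
  by move=> above; apply: (not_above j); exists j.
apply: filterS => n /le_trans; apply.
by rewrite -addrA lerD2l [leRHS]splitr ltW // ltrD.
Qed.

Theorem birkhoff f : Rintegrable mu f ->
  {ae mu, forall x, (fun n => n%:R^-1 * ergodic_sum f n x) @ \oo --> \int[mu]_x f x}.
Proof.
move=> fi; apply: filterS2 (ergodic_avg_le fi) (ergodic_avg_le (RintegrableN fi)).
move=> x ub lb; apply/cvgrPdist_le => e e0.
apply: filterS2 (ub e e0) (lb e e0) => n.
rewrite ergodic_sumN mulrN RintegralN // => ubn lbn.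
rewrite ler_norml; apply/andP; split; lra.
Qed.
End birkhoff.

Lemma cvg_avg_shift (R : realType) (u : nat -> R) (c : R) (k : nat) :
  (fun n => n%:R^-1 * u n) @ \oo --> c ->
  (fun n => n%:R^-1 * (u n.+1 - u k)) @ \oo --> c.
Proof.
move=> avg_c.
have avg_c2 : (fun n => n.+2%:R^-1 * u n.+2) @ \oo --> c.
  rewrite (cvg_shiftS (fun n => n.+1%:R^-1 * u n.+1)).
  by rewrite (cvg_shiftS (fun n => n%:R^-1 * u n)).
suff : (fun n => n.+1%:R^-1 * (u n.+2 - u k)) @ \oo --> c.
  by rewrite (cvg_shiftS (fun n => n%:R^-1 * (u n.+1 - u k))).
have -> : (fun n => n.+1%:R^-1 * (u n.+2 - u k)) =
    (fun n => (1 + harmonic n) * (n.+2%:R^-1 * u n.+2) - harmonic n * u k).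
  apply/funext => n /=; rewrite /harmonic /= -(@natr1 R n.+1).
  have n_ge0 : (0 : R) <= n%:R by rewrite ler0n.
  by field; rewrite !gt_eqF //; lra.
have -> : c = (1 + 0) * c - 0 * u k by rewrite addr0 mul1r mul0r subr0.
apply: cvgB; apply: cvgM; do ?[exact: cvg_cst|exact: cvg_harmonic|exact: avg_c2].
exact: cvgD (cvg_cst _) cvg_harmonic.
Qed.

Definition path_space (R : realType) := g_sigma_algebraType (@cylinders R).

Section path_space.
Context (R : realType).
Local Notation path_space := (path_space R).

Lemma measurable_coord t : measurable_fun setT (fun x : path_space => x t).
Proof.
move=> _ A mA; rewrite setTI; apply: sub_sigma_algebra.
by exists t, A; split.
Qed.

Lemma measurable_shift : measurable_fun setT (Defs.shift : path_space -> path_space).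
Proof.
apply: (@measurability _ _ path_space path_space setT _ (@cylinders R)) => //.
move=> _ [_ [t [A [mA ->]]] <-].
by rewrite setTI; apply: sub_sigma_algebra; exists (t + 1), A.
Qed.

Lemma iter_shift k (x : path_space) t : iter k Defs.shift x t = x (t + k%:Z).
Proof.
elim: k t => [|k IHk] t /=; first by rewrite addr0.
by rewrite /Defs.shift IHk intS addrA.
Qed.

Lemma Rintegral_shift_invariant (mu : probability path_space R)
    (G : int -> path_space -> R) :
  (forall B : set path_space, measurable B -> mu (Defs.shift @^-1` B) = mu B) ->
  (forall t, G (t + 1) = G t \o Defs.shift) -> (forall t, Rintegrable mu (G t)) ->
  forall t, \int[mu]_x G t x = \int[mu]_x G 0 x.
Proof.
move=> preserving GS Gi.
have shiftE := Rintegral_comp_preserving measurable_shift preserving.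
elim/int_rec => [//|n IHn|n IHn]; first by rewrite intS addrC GS shiftE.
rewrite -IHn; have -> : G (- n%:Z) = G (- n.+1%:Z) \o Defs.shift.
  by rewrite -GS; congr G; rewrite intS; ring.
by rewrite shiftE.
Qed.

End path_space.

Section canonical_process.
Context (R : realType) d (T : measurableType d) (P : probability T R).
Context (X : int -> T -> R).
Hypothesis mX : forall t, measurable_fun setT (X t).

Definition path (w : T) : path_space R := fun t => X t w.

Lemma measurable_path : measurable_fun setT path.
Proof.
apply: (@measurability _ _ T (path_space R) setT path (@cylinders R)) => //.
by move=> _ [_ [t [A [mA ->]]] <-]; rewrite setTI -[X in measurable X]setTI; exact: mX.
Qed.

Definition path_law : probability (path_space R) R :=
  distribution P (MeasurableFun.Pack (MeasurableFun.Class
    (isMeasurableFun.Build _ _ _ _ _ measurable_path))).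

Lemma ae_path (Q : path_space R -> Prop) :
  {ae path_law, forall x, Q x} -> {ae P, forall w, Q (path w)}.
Proof.
move=> [N [mN N0 notQN]]; exists (path @^-1` N); split.
- by rewrite -[_ @^-1` _]setTI; exact: measurable_path.
- exact: N0.
- by move=> w /= notQ; apply: notQN.
Qed.

Lemma Rintegrable_path (G : path_space R -> R) : measurable_fun setT G ->
  Rintegrable P (G \o path) -> Rintegrable path_law G.
Proof.
move=> mG Gi; have mEG : measurable_fun setT (EFin \o G) by exact/measurable_EFinP.
exact: (integrable_pushforward measurable_path mEG Gi measurableT).
Qed.

Lemma Rintegral_path (G : path_space R -> R) : measurable_fun setT G ->
  Rintegrable P (G \o path) -> \int[path_law]_x G x = \int[P]_w G (path w).
Proof.
move=> mG Gi; have mEG : measurable_fun setT (EFin \o G) by exact/measurable_EFinP.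
rewrite /Rintegral /path_law /distribution.
by rewrite (integral_pushforward measurable_path mEG Gi).
Qed.

Lemma stationary_shift_preserving : strictly_stationary P X ->
  forall B : set (path_space R), measurable B ->
  path_law (Defs.shift @^-1` B) = path_law B.
Proof. by move=> stat B mB; exact/esym/stat. Qed.

Lemma ergodic_shift : ergodic P X -> forall B : set (path_space R), measurable B ->
  Defs.shift @^-1` B = B -> path_law B = 0%E \/ path_law B = 1%E.
Proof. by move=> erg B mB; exact: erg. Qed.

End canonical_process.

Lemma sum_tail (R : zmodType) (F : nat -> R) h n : (h <= n)%N ->
  \sum_(h.+1 <= t < n.+1) F t = \sum_(0 <= t < n.+1) F t - \sum_(0 <= t < h.+1) F t.
Proof. by move=> hn; rewrite (@big_cat_nat _ _ _ h.+1 0 n.+1) //= addrC addrK. Qed.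

Section lag_averages.
Context (R : realType) d (T : measurableType d) (P : probability T R).
Context (X : int -> T -> R) (g : R -> R -> R) (h : nat).
Hypothesis mX : forall t, measurable_fun setT (X t).
Hypothesis mg : measurable_fun setT (fun p : R * R => g p.1 p.2).
Hypothesis gi : forall t, Rintegrable P (fun w => g (X t w) (X (t - h%:Z) w)).

Let G t (x : path_space R) := g (x t) (x (t - h%:Z)).

Let mG t : measurable_fun setT (G t).
Proof.
exact: measurableT_comp mg
  (measurable_fun_pair (measurable_coord t) (measurable_coord _)).
Qed.

Let Gi t : Rintegrable (path_law P mX) (G t).
Proof. exact: Rintegrable_path (mG t) (gi t). Qed.

Lemma Rintegral_lag_stationary : strictly_stationary P X -> forall t,
  \int[P]_w g (X t w) (X (t - h%:Z) w) = \int[P]_w g (X 0 w) (X (0 - h%:Z) w).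
Proof.
move=> stat t; rewrite -!(Rintegral_path mX (mG _) (gi _)).
apply: Rintegral_shift_invariant => // [|s].
  exact: stationary_shift_preserving.
by apply/funext => x; rewrite /G /= /Defs.shift addrAC.
Qed.

Lemma lag_average_cvg : strictly_stationary P X -> ergodic P X ->
  {ae P, forall w,
    (fun n => n%:R^-1 * \sum_(h.+1 <= t < n.+1) g (X t%:Z w) (X (t%:Z - h%:Z) w))
      @ \oo --> \int[P]_w g (X 0 w) (X (0 - h%:Z) w)}.
Proof.
move=> stat erg; rewrite -(Rintegral_path mX (mG 0) (gi 0)).
have := birkhoff (@measurable_shift R) (stationary_shift_preserving mX stat)
  (ergodic_shift mX erg) (Gi 0).
move=> /ae_path; apply: filterS => w /(cvg_avg_shift h.+1).
apply: cvg_trans; apply: near_eq_cvg; exists h => // n /= hn.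
rewrite sum_tail //; congr (_ * (_ - _)); apply: eq_bigr => k _;
  by rewrite /G !iter_shift add0r sub0r addrC.
Qed.

End lag_averages.

Section sample_autocorrelations.
Context (R : realType) d (T : measurableType d) (X : int -> T -> R).

Lemma ind_nz01 t w : ind_nz X t w = 0 \/ ind_nz X t w = 1.
Proof. by rewrite /ind_nz; case: ifP; [right|left]. Qed.

Lemma ind_nz_lag01 h t w :
  ind_nz X t w * ind_nz X (t - h) w = 0 \/ ind_nz X t w * ind_nz X (t - h) w = 1.
Proof.
by case: (ind_nz01 t w) => ->; case: (ind_nz01 (t - h) w) => ->;
  rewrite ?mulr0 ?mul0r ?mulr1; [left|left|left|right].
Qed.

Lemma rhopr_hat_cvg w h (s gamma p p0 : R) : s != 0 -> p0 != 0 -> p != 0 ->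
  (fun n => gamma0_hat X n h w) @ \oo --> gamma ->
  (fun n => gamma0_hat X n 0 w) @ \oo --> s * p0 ->
  (fun n => gammaa_hat X n h w) @ \oo --> p ->
  (fun n => gammaa_hat X n 0 w) @ \oo --> p0 ->
  (fun n => rhopr_hat X n h w) @ \oo --> s^-1 * gamma / p.
Proof.
move=> s_neq0 p0_neq0 p_neq0 gamma_cvg gamma0_cvg p_cvg p0_cvg.
have -> : s^-1 * gamma / p = gamma / (s * p0) * p0 / p by field; apply/and3P.
apply: cvgM; last exact: cvgV.
by apply: cvgM => //; apply: cvgM => //; apply: cvgV; rewrite // mulf_neq0.
Qed.

End sample_autocorrelations.

Lemma measurable_nz_ind (R : realType) :
  measurable_fun setT (fun a : R => if a != 0 then 1 else 0 : R).
Proof.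
have -> : (fun a : R => if a != 0 then 1 else 0 : R) = \1_(~` [set 0]).
  apply/funext => a; rewrite indicE; have [->|a0] := eqVneq a 0.
    by rewrite memNset //= => /(_ erefl).
  by rewrite mem_set //=; exact/eqP.
by apply: measurable_indic; apply: measurableC; exact: measurable_set1.
Qed.

Section scaled_process.
Context (R : realType) d (T : measurableType d) (P : probability T R).
Context (sigma : R) (eps : int -> T -> R).
Hypothesis sigma_gt0 : 0 < sigma.
Hypothesis meps : forall t, measurable_fun setT (eps t).
Hypothesis r2i : forall t, Rintegrable P (fun w => (sigma * eps t w) ^+ 2).

Local Notation r := (fun t w => sigma * eps t w).
Local Notation a := (ind_nz r).

Lemma measurable_scaled t : measurable_fun setT (r t).
Proof. by apply: measurable_funM => //; exact: measurable_cst. Qed.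

Lemma Rintegrable_scaled_lag t s : Rintegrable P (fun w => r t w * r s w).
Proof.
exact: Rintegrable_mul_sqr (measurable_scaled t) (measurable_scaled s) (r2i t) (r2i s).
Qed.

Lemma measurable_scaled_ind t : measurable_fun setT (a t).
Proof.
have -> : a t = (fun x : R => if x != 0 then 1 else 0 : R) \o r t by [].
by apply: measurableT_comp; [exact: measurable_nz_ind|exact: measurable_scaled].
Qed.

Lemma measurable_lag_ind (h : nat) t :
  measurable_fun setT (fun w => a t w * a (t - h%:Z) w).
Proof. by apply: measurable_funM; exact: measurable_scaled_ind. Qed.

Lemma Rintegrable_lag_ind (h : nat) t : Rintegrable P (fun w => a t w * a (t - h%:Z) w).
Proof.
apply: (Rintegrable_le (measurable_lag_ind h t) (Rintegrable_cst P 1)) => w.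
by case: (ind_nz_lag01 r h%:Z t w) => ->; rewrite ?normr0 ?normr1.
Qed.

Lemma eps_lag_support (h : nat) t w :
  a t w * a (t - h%:Z) w <> 1 -> eps t w * eps (t - h%:Z) w = 0.
Proof.
rewrite /ind_nz !mulf_eq0 (gt_eqF sigma_gt0) /=.
by case: (eps t w =P 0) => [->|_]; case: (eps (t - h%:Z) w =P 0) => [->|_];
  rewrite ?mul0r ?mulr0 ?mulr1.
Qed.

Lemma cond_exp_lag (h : nat) t :
  cond_exp P (fun w => eps t w * eps (t - h%:Z) w) [set w | a t w * a (t - h%:Z) w = 1] =
  sigma ^- 2 * \int[P]_w (r t w * r (t - h%:Z) w) / \int[P]_w (a t w * a (t - h%:Z) w).
Proof.
rewrite /cond_exp -/(Rintegral _ _ _) Rintegral_support; last exact: eps_lag_support.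
rewrite (Rintegral_indicator_fun P (measurable_lag_ind h t) (ind_nz_lag01 r h%:Z t)).
rewrite -RintegralZl //; last exact: Rintegrable_scaled_lag.
congr (_ / _); apply: eq_Rintegral => w _.
by field; rewrite gt_eqF.
Qed.

Lemma second_moment_lag0 t :
  cond_exp P (fun w => eps t w ^+ 2) [set w | a t w = 1] = 1 ->
  \int[P]_w (r t w * r (t - 0%:Z) w) = sigma ^+ 2 * \int[P]_w (a t w * a (t - 0%:Z) w).
Proof.
have -> : cond_exp P (fun w => eps t w ^+ 2) [set w | a t w = 1] =
    cond_exp P (fun w => eps t w * eps (t - 0%:Z) w) [set w | a t w * a (t - 0%:Z) w = 1].
  congr cond_exp; first by apply/funext => w; rewrite subr0 expr2.
  apply/funext => w; rewrite subr0; congr (_ = _).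
  by case: (ind_nz01 r t w) => ->; rewrite ?mulr0 ?mulr1.
rewrite cond_exp_lag => /divr1_eq <-.
by rewrite mulrA mulrV ?mul1r // unitfE expf_neq0 // gt_eqF.
Qed.

Lemma lag_ind_mean_gt0 (h : nat) t :
  (0 < P [set w | (a t w * a (t - h%:Z) w = 1)%R])%E ->
  0 < \int[P]_w (a t w * a (t - h%:Z) w).
Proof.
have mA := measurable_lag_ind h t.
rewrite (Rintegral_indicator_fun P mA (ind_nz_lag01 r h%:Z t)) => A_gt0.
rewrite fine_gt0 // A_gt0 (le_lt_trans (probability_le1 _ _)) ?ltry //.
by rewrite -[X in measurable X]setTI; exact: mA (measurable_set1 1).
Qed.

Hypothesis stat : strictly_stationary P r.

Let mr t : measurable_fun setT (r t) := measurable_scaled t.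

Let mmul : measurable_fun setT (fun p : R * R => p.1 * p.2).
Proof. exact: measurable_funM measurable_fst measurable_snd. Qed.

Let nz2 (x y : R) : R := (if x != 0 then 1 else 0) * (if y != 0 then 1 else 0).

Let mnz2 : measurable_fun setT (fun p : R * R => nz2 p.1 p.2).
Proof.
apply: measurable_funM.
  exact (measurableT_comp (@measurable_nz_ind R) measurable_fst).
exact (measurableT_comp (@measurable_nz_ind R) measurable_snd).
Qed.

Lemma cond_exp_lag_stationary (h : nat) t :
  cond_exp P (fun w => eps t w * eps (t - h%:Z) w) [set w | a t w * a (t - h%:Z) w = 1] =
  sigma ^- 2 * \int[P]_w (r 0 w * r (0 - h%:Z) w) / \int[P]_w (a 0 w * a (0 - h%:Z) w).
Proof.
rewrite cond_exp_lag.
rewrite (Rintegral_lag_stationary mr mmul (Rintegrable_scaled_lag ^~ _) stat).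
by rewrite (Rintegral_lag_stationary mr mnz2 (Rintegrable_lag_ind h) stat).
Qed.

Hypothesis erg : ergodic P r.

Lemma gamma0_hat_cvg : {ae P, forall w (h : nat),
  (fun n => gamma0_hat r n h w) @ \oo --> \int[P]_w (r 0 w * r (0 - h%:Z) w)}.
Proof.
apply: ae_foralln => h.
exact: lag_average_cvg mr mmul (Rintegrable_scaled_lag ^~ _) stat erg.
Qed.

Lemma gammaa_hat_cvg : {ae P, forall w (h : nat),
  (fun n => gammaa_hat r n h w) @ \oo --> \int[P]_w (a 0 w * a (0 - h%:Z) w)}.
Proof.
apply: ae_foralln => h.
exact: lag_average_cvg mr mnz2 (Rintegrable_lag_ind h) stat erg.
Qed.

End scaled_process.

Theorem proposition1 (R : realType) (d : measure_display) (T : measurableType d)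
  (P : probability T R) (m : nat) (sigma : R) (eps : int -> T -> R) :
  (1 <= m)%N ->
  0 < sigma ->
  (forall t, measurable_fun setT (eps t)) ->
  let r := fun t w => sigma * eps t w in
  let a := ind_nz r in
  (forall t, cond_exp P (eps t) [set w | a t w = 1] = 0) ->
  (forall t, cond_exp P (fun w => eps t w ^+ 2) [set w | a t w = 1] = 1) ->
  (forall t (h : nat), (h <= m)%N ->
     (0%E < P [set w | (a t w * a (t - h%:Z) w = 1)%R])%E) ->
  strictly_stationary P r ->
  ergodic P r ->
  (forall t, P.-integrable setT (fun w => (r t w ^+ 2)%:E)) ->
  (forall t, (\int[P]_w (r t w)%:E = 0)%E) ->
  forall t0 : int,
  {ae P, forall w, forall h : nat, (1 <= h <= m)%N ->
     (fun n => rhopr_hat r n h w) @ \oo -->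
       cond_exp P (fun w => eps t0 w * eps (t0 - h%:Z) w)
                  [set w | a t0 w * a (t0 - h%:Z) w = 1]}.
Proof.
move=> _ sigma_gt0 meps r a _ eps2_cond a_pos stat erg r2i _ t0.
have p_gt0 (k : nat) : (k <= m)%N -> 0 < \int[P]_w (a 0 w * a (0 - k%:Z) w).
  by move=> km; exact (lag_ind_mean_gt0 meps (a_pos 0 k km)).
have gamma0E := second_moment_lag0 sigma_gt0 meps r2i (eps2_cond 0).
have := gammaa_hat_cvg meps stat erg; have := gamma0_hat_cvg meps r2i stat erg.
apply: filterS2 => w gamma_cvg p_cvg h /andP[_ hm].
rewrite (cond_exp_lag_stationary sigma_gt0 meps r2i stat).
apply: (rhopr_hat_cvg (p0 := \int[P]_w (a 0 w * a (0 - 0%:Z) w))).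
- by rewrite expf_neq0 // gt_eqF.
- by rewrite gt_eqF // p_gt0.
- by rewrite gt_eqF // p_gt0.
- exact: gamma_cvg.
- by rewrite -gamma0E; exact: gamma_cvg.
- exact: p_cvg.
- exact: p_cvg.
Qed.
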